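(* Let $S$ be an infinite supernatural number and let $\lambda$ be a non-archimedean length function on $\widetilde{\mathbb Z_S}$. Then there exist a scale $s=(s_m)_{m\ge1}$ for $S$ and an increasing sequence $l=(l_m)_{m\ge1}$ of numbers in $(1,\infty)$ with $\lim_{m\to\infty}l_m=\infty$ such that $\lambda=\lambda_{s,l}$.
   Context: $\widetilde{\mathbb Z_S}=\{z\in\mathbb C: z^s=1\text{ for some natural number } s\mid S\}$. A non-archimedean length function on $\widetilde{\mathbb Z_S}$ is a function $\lambda:\widetilde{\mathbb Z_S}\to[1,\infty)$ such that (i) $\lambda(z)=1$ iff $z=1$; (ii) $\lambda(z_1z_2)\le\max\{\lambda(z_1),\lambda(z_2)\}$; (iii) for every $r\ge1$ the set $\{z:\lambda(z)\le r\}$ is finite. A scale for $S$ is a sequence of positive integers $(s_m)_{m\ge1}$ with $s_m\mid s_{m+1}$, $s_m<s_{m+1}$, $S=\mathrm{lcm}(s_m)$; set $s_0:=1$, $l_0:=1$. Every $z\ne1$ in $\widetilde{\mathbb Z_S}$ is uniquely $z=e^{2\pi ij/s_m}$ with $m\ge1$, $0<j<s_m$, $s_m/s_{m-1}\nmid j$, and $\lambda_{s,l}$ is defined by $\lambda_{s,l}(1)=1$ and $\lambda_{s,l}(e^{2\pi ij/s_m})=l_m$ for such $z$. *)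

From mathcomp Require Import all_boot all_order all_algebra all_field.
From mathcomp Require Import reals.
Set Implicit Arguments. Unset Strict Implicit. Unset Printing Implicit Defensive.
Import Order.TTheory GRing.Theory Num.Theory.
Local Open Scope ring_scope.

(* A supernatural number S = prod_p p^(e_p), e_p in N u {oo}, represented by its
   exponent function on primes: S p = Some e_p, or None for e_p = oo.
   (Values at non-primes are irrelevant.) *)
Definition supernat := nat -> option nat.

Definition sdvd (n : nat) (S : supernat) : Prop :=
  forall p, prime p -> match S p with Some k => is_true (logn p n <= k)%N | None => True end.

Definition snat_finite (S : supernat) : Prop :=
  exists n : nat, (0 < n)%N /\ forall p, prime p -> S p = Some (logn p n).

Definition snat_infinite (S : supernat) : Prop := ~ snat_finite S.

Definition inZS (S : supernat) (z : algC) : Prop :=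
  exists s : nat, (0 < s)%N /\ sdvd s S /\ z ^+ s = 1.

(* non-archimedean length function on ~Z_S (lambda given as a function on C,
   only its values on ~Z_S matter) *)
Definition na_length (R : realType) (S : supernat) (lam : algC -> R) : Prop :=
  [/\ (forall z, inZS S z -> 1 <= lam z),
      (forall z, inZS S z -> (lam z = 1 <-> z = 1)),
      (forall z1 z2, inZS S z1 -> inZS S z2 ->
          lam (z1 * z2) <= Num.max (lam z1) (lam z2)) &
      (forall r : R, 1 <= r -> exists F : seq algC,
          forall z, inZS S z -> lam z <= r -> z \in F)].

(* S is the lcm of the natural numbers s_m, m >= 1: for each prime p,
   e_p = sup_m logn p s_m (possibly infinite) *)
Definition is_lcm_seq (S : supernat) (s : nat -> nat) : Prop :=
  forall p, prime p ->
    match S p with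
    | Some k => (forall m, (1 <= m)%N -> (logn p (s m) <= k)%N) /\
                exists m, (1 <= m)%N /\ logn p (s m) = k
    | None => forall k, exists m, (1 <= m)%N /\ (k < logn p (s m))%N
    end.

Definition is_scale (S : supernat) (s : nat -> nat) : Prop :=
  [/\ (forall m, (1 <= m)%N -> (0 < s m)%N),
      (forall m, (1 <= m)%N -> (s m %| s m.+1)%N),
      (forall m, (1 <= m)%N -> (s m < s m.+1)%N) &
      is_lcm_seq S s].

Definition sc (s : nat -> nat) (m : nat) : nat := if m == 0%N then 1%N else s m.

(* e^{2 pi i / n} in algC: n.-root (-1) is the n-th root of -1 of minimal
   nonnegative argument, i.e. e^{i pi / n}; its square is e^{2 pi i / n}. *)
Definition expi (n j : nat) : algC := ((n.-root (-1)) ^+ 2) ^+ j.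

(* lam = lambda_{s,l} on ~Z_S: lambda_{s,l}(1) = 1 and
   lambda_{s,l}(e^{2 pi i j / s_m}) = l_m for m >= 1, 0 < j < s_m,
   s_m / s_{m-1} not dividing j (every z <> 1 in ~Z_S has exactly one such
   representation). *)
Definition eq_lambda_sl (R : realType) (lam : algC -> R)
    (s : nat -> nat) (l : nat -> R) : Prop :=
  lam 1 = 1 /\
  forall m j, (1 <= m)%N -> (0 < j)%N -> (j < s m)%N ->
    ~~ (s m %/ sc s m.-1 %| j)%N ->
    lam (expi (s m) j) = l m.

(* A closed ball B_r = {z : lambda z <= r}, r >= 1, is a finite subgroup of ~Z_S, hence
   equal to the group mu_n of n-th roots of unity for some n | S.  Since S is infinite,
   lambda is unbounded, while it takes only finitely many values below any bound; so its
   values are 1 = l_0 < l_1 < l_2 < ... with l_m -> oo.  With B_(l_m) = mu_(s_m), the s_m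
   form a scale for S (every p^k | S divides some s_m because l_m -> oo), and an element
   of mu_(s_m) outside mu_(s_(m-1)) has length in (l_(m-1), l_m], hence exactly l_m.
   The only geometric input is that (n.-root (-1))^2, the encoding of e^(2 pi i / n), is a
   primitive n-th root of unity. *)

From mathcomp Require Import all_boot all_order all_algebra all_field.
From mathcomp Require Import boolp reals.
From mathcomp Require Import ring lra zify.
Set Implicit Arguments.
Unset Strict Implicit.
Unset Printing Implicit Defensive.
Import Order.TTheory GRing.Theory Num.Theory.
Local Open Scope ring_scope.

(* [a + i b] and [c + i s] are unit complex numbers [w] and [r]; the two hypotheses
   say that multiplying [w] by [r^2] or by its conjugate does not increase its real part. *)
Lemma cos_le_of_rot2_le (F : realFieldType) (a b c s : F) :
  a ^+ 2 + b ^+ 2 = 1 -> c ^+ 2 + s ^+ 2 = 1 -> c < 1 ->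
  a * (c ^+ 2 - s ^+ 2) - b * (2 * c * s) <= a ->
  a * (c ^+ 2 - s ^+ 2) + b * (2 * c * s) <= a -> c <= a.
Proof.
move=> ab1 cs1 c_lt1 le_rot le_rotV.
have [s0 | s_neq0] := eqVneq s 0.
  have c_eqN1 : c = -1 by rewrite s0 in cs1; nra.
  by rewrite c_eqN1; nra.
have s2_gt0 : 0 < s ^+ 2 by rewrite exprn_even_gt0.
have Re_rot : a * (c ^+ 2 - s ^+ 2) = a - 2 * (a * s ^+ 2).
  by rewrite -[c ^+ 2](addrK (s ^+ 2)) cs1; ring.
rewrite Re_rot in le_rot le_rotV.
have a_ge0 : 0 <= a by nra.
have bc_le_as : (b * c) ^+ 2 <= (a * s) ^+ 2.
  rewrite -(ler_pM2r s2_gt0) -!exprMn.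
  suff : 0 <= (a * s ^+ 2 - b * c * s) * (a * s ^+ 2 + b * c * s) by nra.
  apply: mulr_ge0; lra.
nra.
Qed.

Lemma Re_lt1_of_norm1 (r : algC) : `|r| = 1 -> r != 1 -> 'Re r < 1.
Proof.
move=> r1 r_neq1; rewrite lt_neqAle -{2}r1 (leif_Re_Creal r) andbT.
apply: contra r_neq1 => /eqP Re_r1.
have : 'Re r == `|r| by rewrite r1 Re_r1.
by rewrite (leif_Re_Creal r).2 => /ger0_norm; rewrite r1 => ->.
Qed.

Lemma Re_le_of_rot2_le (w r : algC) : `|w| = 1 -> `|r| = 1 -> r != 1 ->
  'Re (w * r ^+ 2) <= 'Re w -> 'Re (w * r^* ^+ 2) <= 'Re w -> 'Re r <= 'Re w.
Proof.
move=> w1 r1 r_neq1.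
have Re_r2 : 'Re (r ^+ 2) = 'Re r ^+ 2 - 'Im r ^+ 2 by rewrite expr2 ReM -!expr2.
have Im_r2 : 'Im (r ^+ 2) = 2 * 'Re r * 'Im r by rewrite expr2 ImM; ring.
rewrite -rmorphXn [in X in X -> _]ReM [in X in _ -> X -> _]ReM Re_conj Im_conj.
rewrite Re_r2 Im_r2 mulrN opprK.
move=> le_rot le_rotV.
pose A := in_algR (Creal_Re w); pose B := in_algR (Creal_Im w).
pose C := in_algR (Creal_Re r); pose S := in_algR (Creal_Im r).
apply: (@cos_le_of_rot2_le _ A B C S).
- by apply: val_inj; rewrite /= -!expr2 -normC2_Re_Im w1 expr1n.
- by apply: val_inj; rewrite /= -!expr2 -normC2_Re_Im r1 expr1n.
- exact: Re_lt1_of_norm1.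
- exact: le_rot.
- exact: le_rotV.
Qed.

Lemma norm_eq1_of_exprN1 (y : algC) n : (0 < n)%N -> y ^+ n = -1 -> `|y| = 1.
Proof.
move=> n_gt0 yn; apply/eqP; rewrite -(pexpr_eq1 n_gt0) ?normr_ge0 //.
by rewrite -normrX yn normrN normr1.
Qed.

Lemma exists_Re_max_orbit (z x : algC) n : (0 < n)%N -> x ^+ n = 1 ->
  exists j, forall k, 'Re (z * x ^+ k) <= 'Re (z * x ^+ j).
Proof.
case: n => // n _ xn.
pose f (i : 'I_n.+1) := 'Re (z * x ^+ i).
have [j _ f_max] := @real_arg_maxP _ _ ord0 predT f isT (fun i _ => Creal_Re _).
exists j => k; rewrite -(expr_mod k xn).
exact: (f_max (Ordinal (ltn_pmod k (ltn0Sn n)))).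
Qed.

Lemma prim_root_of_expr (R : nzRingType) (r : R) n k : (0 < n)%N ->
  r ^+ n = 1 -> n.-primitive_root (r ^+ k) -> n.-primitive_root r.
Proof.
move=> n_gt0 rn prim_rk; have [m prim_r m_dvd_n] := prim_order_exists n_gt0 rn.
suff /eqP <- : m == n by [].
rewrite eqn_dvd m_dvd_n /= (prim_order_dvd prim_rk m).
by rewrite exprAC (prim_expr_order prim_r) expr1n.
Qed.

Lemma oner_neqN1 (R : numDomainType) : (1 : R) != -1.
Proof. by rewrite -addr_eq0 -[1 + 1]/(2%:R : R) pnatr_eq0. Qed.

Section RootCN1.
Variables (n : nat) (n_gt0 : (0 < n)%N).
Local Notation r := (n.-root (-1 : algC)).

Lemma rootCN1K : r ^+ n = -1.
Proof. exact: rootCK. Qed.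

Lemma norm_rootCN1 : `|r| = 1.
Proof. exact: norm_eq1_of_exprN1 n_gt0 rootCN1K. Qed.

Lemma rootCN1_neq1 : r != 1.
Proof. by apply: contra_neq (@oner_neqN1 algC) => r_eq1; rewrite -rootCN1K r_eq1 expr1n. Qed.

Lemma eq_rootCN1_of_Re_rot2_le (w : algC) : w ^+ n = -1 ->
  'Re (w * r ^+ 2) <= 'Re w -> 'Re (w * r^* ^+ 2) <= 'Re w -> w = r \/ w = r^*.
Proof.
move=> wn le_rot le_rotV; have w1 := norm_eq1_of_exprN1 n_gt0 wn.
have Re_w : 'Re w = 'Re r.
  apply: le_anti; rewrite (Re_le_of_rot2_le w1 norm_rootCN1 rootCN1_neq1) // andbT.
  have [Im_w_ge0 | Im_w_lt0] := real_ge0P (Creal_Im w); first exact: rootC_Re_max.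
  rewrite -Re_conj; apply: rootC_Re_max n_gt0 _ _; last by rewrite Im_conj oppr_ge0 ltW.
  by rewrite -rmorphXn wn rmorphN rmorph1.
have [Im_ge0 | Im_lt0] := real_ge0P (rpredM (Creal_Im w) (Creal_Im r)).
  by left; apply: eqC_semipolar; rewrite ?w1 ?norm_rootCN1.
right; apply: eqC_semipolar; rewrite ?norm_conjC ?w1 ?norm_rootCN1 ?Re_conj //.
by rewrite Im_conj mulrN oppr_ge0 ltW.
Qed.

(* Take a primitive [2n]-th root [z]: among the points [z * r ^+ (2 * j)], one of
   largest real part has both rotated neighbours below it, so it is [r] or [r^*],
   which puts [z] in the cyclic group generated by [r]. *)
Lemma rootCN1_prim : (n.*2).-primitive_root r.
Proof.
have n2_gt0 : (0 < n.*2)%N by rewrite double_gt0.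
have r2n : r ^+ n.*2 = 1 by rewrite -addnn exprD rootCN1K mulrNN mulr1.
have conj_r : r^* = r ^+ (n.*2).-1.
  apply: (mulIf (x := r)); first by rewrite -normr_eq0 norm_rootCN1 oner_neq0.
  by rewrite -exprSr prednK // r2n mulrC -normCK norm_rootCN1 expr1n.
have [z prim_z] := C_prim_root_exists n2_gt0.
have zn : z ^+ n = -1.
  have : (z ^+ n) ^+ 2 == 1 by rewrite -exprM muln2 prim_expr_order.
  rewrite sqrf_eq1 -(prim_order_dvd prim_z) => /orP[|/eqP //].
  by move=> /(dvdn_leq n_gt0); rewrite -addnn; lia.
set x := r ^+ 2; have xn : x ^+ n = 1 by rewrite -exprM mul2n r2n.
have [j Re_max] := exists_Re_max_orbit z n_gt0 xn; set w := z * x ^+ j.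
have [k w_eq] : exists k, w = r ^+ k.
  have wn : w ^+ n = -1 by rewrite exprMn zn exprAC xn expr1n mulr1.
  have [||->|->] := eq_rootCN1_of_Re_rot2_le wn.
  - by rewrite -mulrA -exprSr Re_max.
  - by rewrite conj_r exprAC -mulrA -exprD Re_max.
  - by exists 1%N; rewrite expr1.
  - by exists (n.*2).-1.
have z_eq : z = r ^+ (k + 2 * (j * n.-1)).
  rewrite exprD exprM -/x -w_eq -mulrA -exprD -mulnS prednK //.
  by rewrite mulnC exprM xn expr1n mulr1.
by move: prim_z; rewrite z_eq; apply: prim_root_of_expr.
Qed.

End RootCN1.

Lemma expi_expr n j : expi n j = expi n 1 ^+ j.
Proof. by rewrite /expi expr1. Qed.

Lemma expi_prim n : (0 < n)%N -> n.-primitive_root (expi n 1).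
Proof.
move=> n_gt0; rewrite /expi expr1.
have n_dvd : (n %| n.*2)%N by rewrite -muln2 dvdn_mulr.
by have := dvdn_prim_root (rootCN1_prim n_gt0) n_dvd; rewrite -muln2 mulKn.
Qed.

Lemma expr_bezout (R : pzRingType) (w : R) n p q i j : (0 < n)%N -> w ^+ n = 1 ->
  (i * p = j * q + 1)%N -> w = (w ^+ p) ^+ i * (w ^+ q) ^+ (j * n.-1).
Proof.
case: n => // n _ wn bezout; rewrite -!exprM -exprD /=.
have -> : (p * i + q * (j * n) = 1 + j * q * n.+1)%N by nia.
by rewrite exprD expr1 exprM exprAC wn expr1n mulr1.
Qed.

Section UnityRootSubgroups.
Variables (F : fieldType) (B : F -> Prop).
Hypotheses (B1 : B 1) (BM : forall x y, B x -> B y -> B (x * y))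
  (BX : forall x k, B x -> B (x ^+ k)).

Lemma unity_roots_sub_prim z d : B z -> d.-primitive_root z ->
  forall y, y ^+ d = 1 -> B y.
Proof. by move=> Bz prim_z y /(prim_rootP prim_z)[i ->]; apply: BX. Qed.

Lemma unity_roots_sub_lcm a b : (0 < a)%N -> (0 < b)%N ->
  (forall y, y ^+ a = 1 -> B y) -> (forall y, y ^+ b = 1 -> B y) ->
  forall y, y ^+ lcmn a b = 1 -> B y.
Proof.
move=> a_gt0 b_gt0 sub_a sub_b y y_lcm; set g := gcdn a b.
have [i j bezout _] := egcdnP b a_gt0; rewrite -/g in bezout.
have g_gt0 : (0 < g)%N by rewrite gcdn_gt0 a_gt0.
have [ga gb] : (g %| a)%N /\ (g %| b)%N by rewrite dvdn_gcdl dvdn_gcdr.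
have bezout' : (i * (a %/ g) = j * (b %/ g) + 1)%N.
  by apply/eqP; rewrite -(eqn_pmul2r g_gt0) mulnDl mul1n -!mulnA !divnK // bezout.
have l_gt0 : (0 < lcmn a b)%N by rewrite lcmn_gt0 a_gt0.
rewrite (expr_bezout l_gt0 y_lcm bezout').
apply: BM; apply: BX; [apply: sub_b | apply: sub_a]; rewrite -exprM.
  by rewrite divn_mulAC.
by rewrite divn_mulAC // mulnC.
Qed.

Lemma unity_roots_cover : (forall z, B z -> exists2 m, (0 < m)%N & z ^+ m = 1) ->
  forall L : seq F, exists n, [/\ (0 < n)%N, (forall y, y ^+ n = 1 -> B y) &
    forall z, z \in L -> B z -> z ^+ n = 1].
Proof.
move=> B_torsion; elim=> [|z L [n [n_gt0 sub_n cover_L]]].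
  by exists 1%N; split=> // y; rewrite expr1 => ->.
have [Bz | notBz] := pselect (B z); last first.
  by exists n; split=> // y; rewrite inE => /predU1P[-> /notBz | /cover_L].
have [m m_gt0 zm] := B_torsion z Bz.
have [d prim_z _] := prim_order_exists m_gt0 zm.
have d_gt0 := prim_order_gt0 prim_z.
exists (lcmn n d); split.
- by rewrite lcmn_gt0 n_gt0.
- exact: unity_roots_sub_lcm n_gt0 d_gt0 sub_n (unity_roots_sub_prim Bz prim_z).
- move=> y; rewrite inE => /predU1P[-> _ | yL By].
    by apply/eqP; rewrite -(prim_order_dvd prim_z) dvdn_lcmr.
  have [k ->] := dvdnP (dvdn_lcml n d).
  by rewrite mulnC exprM cover_L // expr1n.
Qed.

End UnityRootSubgroups.

Lemma sdvd1 S : sdvd 1 S.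
Proof. by move=> p _; case: (S p) => // e; rewrite logn1. Qed.

Lemma sdvd_dvd S d n : (0 < n)%N -> (d %| n)%N -> sdvd n S -> sdvd d S.
Proof.
move=> n_gt0 d_dvd_n n_dvd_S p p_prime; have := n_dvd_S p p_prime.
by case: (S p) => // e; apply: leq_trans (dvdn_leq_log _ n_gt0 d_dvd_n).
Qed.

Lemma sdvd_lcm S a b : (0 < a)%N -> (0 < b)%N -> sdvd a S -> sdvd b S ->
  sdvd (lcmn a b) S.
Proof.
move=> a_gt0 b_gt0 a_dvd_S b_dvd_S p p_prime.
have := a_dvd_S p p_prime; have := b_dvd_S p p_prime.
by case: (S p) => // e b_le a_le; rewrite logn_lcm // geq_max a_le.
Qed.

Lemma sdvd_pfactor S p k : prime p ->
  (forall e, S p = Some e -> (k <= e)%N) -> sdvd (p ^ k) S.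
Proof.
move=> p_prime k_le q q_prime; rewrite lognX (logn_prime q p_prime).
have [-> | q_neq_p] := eqVneq q p.
  by case: (S p) k_le => // e /(_ e erefl); rewrite muln1.
by case: (S q) => // e; rewrite muln0.
Qed.

Lemma sdvd_mulp S D p : prime p -> (0 < D)%N -> sdvd D S ->
  (forall e, S p = Some e -> (logn p D < e)%N) -> sdvd (D * p) S.
Proof.
move=> p_prime D_gt0 D_dvd_S Dp_lt q q_prime; have := D_dvd_S q q_prime.
rewrite (lognM _ D_gt0 (prime_gt0 p_prime)) (logn_prime q p_prime).
have [-> | q_neq_p] := eqVneq q p.
  by case: (S p) Dp_lt => // e /(_ e erefl); rewrite addn1.
by case: (S q) => // e; rewrite addn0.
Qed.

Lemma sdvd_unbounded S : snat_infinite S -> forall n, exists2 d, (n < d)%N & sdvd d S.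
Proof.
move=> S_inf n; apply: contra_notP S_inf => no_big.
have bounded d : sdvd d S -> (d <= n)%N.
  by move=> d_dvd_S; rewrite leqNgt; apply/negP => n_lt_d; apply: no_big; exists d.
pose P d := (0 < d)%N && `[< sdvd d S >].
have P1 : P 1%N by apply/andP; split => //; apply/asboolP; exact: sdvd1.
have P_bounded d : P d -> (d <= n)%N by move=> /andP[_ /asboolP]; exact: bounded.
have [D /andP[D_gt0 /asboolP D_dvd_S] D_max] := ex_maxnP (ex_intro P 1%N P1) P_bounded.
have no_mulp p : prime p -> ~ sdvd (D * p) S.
  move=> p_prime Dp_dvd_S; have /D_max : P (D * p)%N.
    by rewrite /P muln_gt0 D_gt0 prime_gt0 //=; apply/asboolP.
  by rewrite leqNgt ltn_Pmulr ?prime_gt1.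
exists D; split => // p p_prime; have := D_dvd_S p p_prime.
case E : (S p) => [e|]; last first.
  by case: (no_mulp p p_prime); apply: sdvd_mulp => // e'; rewrite E.
move=> le_e; have [lt_e | | -> //] := ltngtP (logn p D) e.
  by case: (no_mulp p p_prime); apply: sdvd_mulp => // e'; rewrite E => -[<-].
by rewrite ltnNge le_e.
Qed.

Lemma inZS1 S : inZS S 1.
Proof. by exists 1%N; rewrite expr1; split=> //; split=> //; exact: sdvd1. Qed.

Lemma inZSM S z1 z2 : inZS S z1 -> inZS S z2 -> inZS S (z1 * z2).
Proof.
move=> [a [a_gt0 [a_dvd_S z1a]]] [b [b_gt0 [b_dvd_S z2b]]].
exists (lcmn a b); rewrite lcmn_gt0 a_gt0 b_gt0; split=> //; split; first exact: sdvd_lcm.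
have [[i lcm_a] [j lcm_b]] := (dvdnP (dvdn_lcml a b), dvdnP (dvdn_lcmr a b)).
by rewrite exprMn {1}lcm_a {}lcm_b !(mulnC _ a) !(mulnC _ b) !exprM z1a z2b !expr1n mulr1.
Qed.

Lemma inZSX S z k : inZS S z -> inZS S (z ^+ k).
Proof. by move=> [n [n_gt0 [n_dvd_S zn]]]; exists n; rewrite exprAC zn expr1n. Qed.

Lemma sdvd_of_prim_inZS S n z : n.-primitive_root z -> inZS S z -> sdvd n S.
Proof.
move=> prim_z [m [m_gt0 [m_dvd_S zm]]]; apply: sdvd_dvd m_gt0 _ m_dvd_S.
by rewrite (prim_order_dvd prim_z) zm.
Qed.

Section Length.
Variables (R : realType) (S : supernat) (lam : algC -> R).
Hypothesis lamS : na_length S lam.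

Lemma lam1 : lam 1 = 1.
Proof. by case: lamS => _ lam_eq1 _ _; apply/(lam_eq1 1 (inZS1 S)). Qed.

Lemma lamX_le z k : inZS S z -> lam (z ^+ k) <= lam z.
Proof.
case: lamS => lam_ge1 _ lamM _ zS; elim: k => [|k IHk]; first by rewrite lam1 lam_ge1.
by rewrite exprS (le_trans (lamM _ _ zS (inZSX k zS))) // ge_max lexx IHk.
Qed.

Definition ball (r : R) (z : algC) := inZS S z /\ lam z <= r.

Lemma ballW r r' z : r <= r' -> ball r z -> ball r' z.
Proof. by move=> r_le [zS zr]; split; last exact: le_trans r_le. Qed.

Lemma ball1 r : 1 <= r -> ball r 1.
Proof. by rewrite /ball lam1; split=> //; exact: inZS1. Qed.

Lemma ballM r z1 z2 : ball r z1 -> ball r z2 -> ball r (z1 * z2).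
Proof.
case: lamS => _ _ lamM _ [z1S z1r] [z2S z2r]; split; first exact: inZSM.
by rewrite (le_trans (lamM _ _ z1S z2S)) // ge_max z1r z2r.
Qed.

Lemma ballX r z k : ball r z -> ball r (z ^+ k).
Proof. by move=> [zS zr]; split; [exact: inZSX | exact: le_trans (lamX_le k zS) zr]. Qed.

Lemma ball_eq_unity_roots r : 1 <= r ->
  exists n, [/\ (0 < n)%N, sdvd n S & forall z, ball r z <-> z ^+ n = 1].
Proof.
move=> r_ge1; have [_ _ _ lam_finite] := lamS; have [L ball_L] := lam_finite r r_ge1.
have ball_torsion z : ball r z -> exists2 m, (0 < m)%N & z ^+ m = 1.
  by move=> [[m [m_gt0 [_ zm]]] _]; exists m.
have [n [n_gt0 sub_n cover_L]] :=
  unity_roots_cover (ball1 r_ge1) (@ballM r) (@ballX r) ball_torsion L.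
have prim_n := expi_prim n_gt0.
exists n; split=> //.
  by have [zS _] := sub_n _ (prim_expr_order prim_n); exact: sdvd_of_prim_inZS zS.
by move=> z; split=> [[zS zr] | /sub_n //]; apply: cover_L; [apply: ball_L | split].
Qed.

End Length.

Section Scale.
Variables (R : realType) (S : supernat) (lam : algC -> R).
Hypotheses (S_inf : snat_infinite S) (lamS : na_length S lam).

Lemma lam_unbounded r : exists2 z, inZS S z & r < lam z.
Proof.
apply: contrapT => lam_bounded.
have r'_ge1 : 1 <= Num.max r 1 by rewrite le_max lexx orbT.
have [n [n_gt0 _ ball_n]] := ball_eq_unity_roots lamS r'_ge1.
have [d n_lt_d d_dvd_S] := sdvd_unbounded S_inf n.
have d_gt0 : (0 < d)%N := leq_ltn_trans (leq0n n) n_lt_d.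
have prim_d := expi_prim d_gt0.
have zS : inZS S (expi d 1) by exists d; rewrite prim_expr_order.
have /ball_n : ball S lam (Num.max r 1) (expi d 1).
  split=> //; rewrite le_max; apply/orP; left; rewrite leNgt; apply/negP => r_lt.
  by apply: lam_bounded; exists (expi d 1).
move/eqP; rewrite -(prim_order_dvd prim_d) => /(dvdn_leq n_gt0).
by rewrite leqNgt n_lt_d.
Qed.

Definition lam_value (v : R) := exists2 z, inZS S z & lam z = v.

Lemma next_value_exists r : exists v,
  [/\ lam_value v, r < v & forall u, lam_value u -> r < u -> v <= u].
Proof.
have [z0 z0S r_lt_z0] := lam_unbounded r.
have [lam_ge1 _ _ lam_finite] := lamS; have [L ball_L] := lam_finite _ (lam_ge1 _ z0S).
have idx z : z \in L -> (index z L < size L)%N by rewrite index_mem.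
pose P (i : 'I_(size L)) := (r < lam L`_i) && `[< inZS S L`_i >].
have z0L : z0 \in L := ball_L _ z0S (lexx _).
have P_z0 : P (Ordinal (idx _ z0L)) by rewrite /P /= nth_index // r_lt_z0; apply/asboolP.
have [i /andP[r_lt /asboolP iS] i_min] := arg_minP (fun i : 'I_(size L) => lam L`_i) P_z0.
exists (lam L`_i); split=> //; first by exists L`_i.
move=> _ [z zS <-] r_lt_z; have [z_le | z_gt] := leP (lam z) (lam z0).
  have zL := ball_L _ zS z_le.
  have := i_min (Ordinal (idx _ zL)); rewrite /P /= nth_index // r_lt_z.
  by apply; apply/asboolP.
apply: le_trans (ltW z_gt).
by have := i_min _ P_z0; rewrite /= nth_index.
Qed.

Definition next_value r := sval (cid (next_value_exists r)).

Lemma next_value_value r : lam_value (next_value r).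
Proof. by case: (svalP (cid (next_value_exists r))). Qed.

Lemma next_value_gt r : r < next_value r.
Proof. by case: (svalP (cid (next_value_exists r))). Qed.

Lemma next_value_min r u : lam_value u -> r < u -> next_value r <= u.
Proof. by case: (svalP (cid (next_value_exists r))) => _ _; apply. Qed.

Definition level m := iter m next_value 1.

Lemma level_lt_succ m : level m < level m.+1.
Proof. exact: next_value_gt. Qed.

Lemma level_lt : {homo level : m n / (m < n)%N >-> m < n}.
Proof. exact: homo_ltn lt_trans level_lt_succ. Qed.

Lemma level_le : {homo level : m n / (m <= n)%N >-> m <= n}.
Proof. exact: homo_leq lexx le_trans (fun m => ltW (level_lt_succ m)). Qed.

Lemma level_ge1 m : 1 <= level m.
Proof. exact: (level_le (leq0n m)). Qed.

Lemma level_gt1 m : (0 < m)%N -> 1 < level m.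
Proof. exact: (@level_lt 0). Qed.

Lemma level_unbounded M : exists N, forall m, (N <= m)%N -> M < level m.
Proof.
suff [N M_lt] : exists N, M < level N.
  by exists N => m /level_le; apply: lt_le_trans.
apply: contrapT => level_bounded.
have M'_ge1 : 1 <= Num.max M 1 by rewrite le_max lexx orbT.
have level_le_M' N : level N <= Num.max M 1.
  rewrite le_max; apply/orP; left; rewrite leNgt; apply/negP => M_lt.
  by apply: level_bounded; exists N.
have [_ _ _ lam_finite] := lamS; have [L ball_L] := lam_finite _ M'_ge1.
pose levels := [seq level i.+1 | i <- iota 0 (size L).+1].
have levels_sub : {subset levels <= map lam L}.
  move=> _ /mapP[i _ ->]; have [z zS lz] := next_value_value (level i).
  have lz_le : lam z <= Num.max M 1 by rewrite lz; exact: level_le_M' i.+1.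
  have -> : level i.+1 = lam z by rewrite lz.
  by rewrite map_f // ball_L.
have levels_uniq : uniq levels.
  rewrite map_inj_uniq ?iota_uniq // => i j eq_ij.
  have [i_lt_j | j_lt_i | //] := ltngtP i j.
    by have := @level_lt i.+1 j.+1 i_lt_j; rewrite eq_ij ltxx.
  by have := @level_lt j.+1 i.+1 j_lt_i; rewrite eq_ij ltxx.
by have := uniq_leq_size levels_uniq levels_sub; rewrite !size_map size_iota ltnn.
Qed.

Definition scale m := sval (cid (ball_eq_unity_roots lamS (level_ge1 m))).

Lemma scale_gt0 m : (0 < scale m)%N.
Proof. by case: (svalP (cid (ball_eq_unity_roots lamS (level_ge1 m)))). Qed.

Lemma scale_sdvd m : sdvd (scale m) S.
Proof. by case: (svalP (cid (ball_eq_unity_roots lamS (level_ge1 m)))). Qed.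

Lemma ball_level m z : ball S lam (level m) z <-> z ^+ scale m = 1.
Proof. by case: (svalP (cid (ball_eq_unity_roots lamS (level_ge1 m)))). Qed.

Lemma ball_level_prim m : ball S lam (level m) (expi (scale m) 1).
Proof. exact/ball_level/prim_expr_order/expi_prim/scale_gt0. Qed.

Lemma scale0 : scale 0 = 1%N.
Proof.
have [zS z_le1] := ball_level_prim 0; have [lam_ge1 lam_eq1 _ _] := lamS.
have /(lam_eq1 _ zS) z_eq1 : lam (expi (scale 0) 1) = 1.
  by apply: le_anti; rewrite z_le1 lam_ge1.
by apply/eqP; rewrite -dvdn1 (prim_order_dvd (expi_prim (scale_gt0 0))) expr1 z_eq1.
Qed.

Lemma scale_dvd_succ m : (scale m %| scale m.+1)%N.
Proof.
rewrite (prim_order_dvd (expi_prim (scale_gt0 m))); apply/eqP/ball_level.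
exact: ballW (ltW (level_lt_succ m)) (ball_level_prim m).
Qed.

Lemma scale_lt_succ m : (scale m < scale m.+1)%N.
Proof.
rewrite ltn_neqAle dvdn_leq ?scale_gt0 ?scale_dvd_succ // andbT.
apply/eqP => eq_scale; have [z zS lz] := next_value_value (level m).
have /ball_level : ball S lam (level m.+1) z by split; rewrite ?lz.
rewrite -eq_scale => /ball_level[_].
by rewrite lz leNgt next_value_gt.
Qed.

Lemma dvdn_scale d : (0 < d)%N -> sdvd d S -> exists2 m, (0 < m)%N & (d %| scale m)%N.
Proof.
move=> d_gt0 d_dvd_S; have prim_d := expi_prim d_gt0.
have zS : inZS S (expi d 1) by exists d; rewrite prim_expr_order.
have [N lam_lt] := level_unbounded (lam (expi d 1)).
exists (maxn N 1); first by rewrite leq_max orbT.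
rewrite (prim_order_dvd prim_d); apply/eqP/ball_level; split=> //.
by apply/ltW/lam_lt; rewrite leq_maxl.
Qed.

Lemma is_scale_scale : is_scale S scale.
Proof.
split=> [m _ | m _ | m _ | p p_prime]; [exact: scale_gt0 | exact: scale_dvd_succ |
  exact: scale_lt_succ | ].
have pk_gt0 k : (0 < p ^ k)%N by rewrite expn_gt0 prime_gt0.
case E : (S p) => [e|] => [|k].
  split=> [m _ | ]; first by have := scale_sdvd m p_prime; rewrite E.
  have [|m m_gt0 pe_dvd] := dvdn_scale (pk_gt0 e) (sdvd_pfactor p_prime _).
    by move=> e'; rewrite E => -[->].
  exists m; split=> //; apply/eqP; rewrite eqn_leq -pfactor_dvdn ?scale_gt0 // pe_dvd andbT.
  by have := scale_sdvd m p_prime; rewrite E.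
have [|m m_gt0 pk_dvd] := dvdn_scale (pk_gt0 k.+1) (sdvd_pfactor p_prime _).
  by move=> e'; rewrite E.
by exists m; split=> //; rewrite -pfactor_dvdn ?scale_gt0.
Qed.

Lemma lam_expi_scale m j : (1 <= m)%N -> (0 < j)%N -> (j < scale m)%N ->
  ~~ (scale m %/ sc scale m.-1 %| j)%N -> lam (expi (scale m) j) = level m.
Proof.
case: m => // k _ j_gt0 j_lt.
have -> : sc scale k = scale k by rewrite /sc; case: eqP => // ->; rewrite scale0.
move=> j_ndvd; have prim_k1 := expi_prim (scale_gt0 k.+1).
have [zS z_le] : ball S lam (level k.+1) (expi (scale k.+1) j).
  by apply/ball_level; rewrite expi_expr exprAC (prim_expr_order prim_k1) expr1n.
apply: le_anti; rewrite z_le leNgt; apply/negP => z_lt.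
have z_le_k : lam (expi (scale k.+1) j) <= level k.
  rewrite leNgt; apply/negP => /(next_value_min (ex_intro2 _ _ _ zS erefl)).
  by rewrite leNgt z_lt.
move: (ball_level k (expi (scale k.+1) j)) => [/(_ (conj zS z_le_k)) + _].
rewrite expi_expr -exprM => /eqP; rewrite -(prim_order_dvd prim_k1).
by rewrite -{1}(divnK (scale_dvd_succ k)) dvdn_pmul2r ?scale_gt0 // (negbTE j_ndvd).
Qed.

End Scale.

Theorem mainTheorem4 (R : realType) (S : supernat) (lam : algC -> R) :
  snat_infinite S -> na_length S lam ->
  exists (s : nat -> nat) (l : nat -> R),
    [/\ is_scale S s,
        (forall m, (1 <= m)%N -> 1 < l m),
        (forall m, (1 <= m)%N -> l m < l m.+1),
        (forall M : R, exists N : nat, forall m, (N <= m)%N -> M < l m) &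
        eq_lambda_sl lam s l].
Proof.
move=> S_inf lamS; exists (scale S_inf lamS), (level S_inf lamS); split.
- exact: is_scale_scale.
- by move=> m; exact: level_gt1.
- by move=> m _; exact: level_lt_succ.
- exact: level_unbounded.
- split; [exact: (lam1 lamS) | move=> m j; exact: lam_expi_scale].
Qed.
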